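(* Suppose the following two conditions hold: (i) $\mathrm{rank}(A_{\mathrm{eq}}) = \mathrm{rank}([A_{\mathrm{eq}} \; b_{\mathrm{eq}}])$, and (ii) $n_u n_L \geq \mathrm{rank}(A_{\mathrm{eq}})$, where $A_{\mathrm{eq}}$ is the block-diagonal matrix with $n_u$ diagonal blocks each equal to $W_{\Gamma_{\mathrm{eq}},L}^T$, and $b_{\mathrm{eq}} = [-(K_{\mathrm{lqr}}^{(1)})^T; \dots; -(K_{\mathrm{lqr}}^{(n_u)})^T]$ stacks the negated transposed rows of $K_{\mathrm{lqr}}$. Then the solution $(\hat{W}_{L+1}^*, \hat{b}_{L+1}^* )$ of the convex optimization problem $$\min_{\hat{W}_{L+1},\hat{b}_{L+1}} \sum_{i,j=1}^{n_u,n_L} (\hat{W}_{L+1}^{(i,j)} - W_{L+1}^{(i,j)})^2 + \sum_{i=1}^{n_u} (\hat{b}_{L+1}^{(i)} - b_{L+1}^{(i)})^2$$ subject to $\hat{W}_{L+1} W_{\Gamma_{\mathrm{eq}},L} = -K_{\mathrm{lqr}}$ and $\hat{W}_{L+1} b_{\Gamma_{\mathrm{eq}},L} + \hat{b}_{L+1} = 0$, provides a weight and bias for the last layer such that the modified network $\mathcal{N}(x;\theta_{\mathrm{lqr}})$, with $\theta_{l,\mathrm{lqr}} = \theta_l$ for $l \in \{1,\dots,L\}$ and last-layer parameters $\{\hat{W}_{L+1}^*, \hat{b}_{L+1}^*\}$, satisfies $\mathcal{N}(x;\theta_{\mathrm{lqr}}) = -K_{\mathrm{lqr}} x$ for all $x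 \in \mathcal{R}_{\mathrm{eq}}$, while minimizing the change in the parameters of the last layer.
   Context: Consider a linear system $x_{k+1} = A x_k + B u_k$ with $x \in \mathbb{R}^{n_x}$, $u \in \mathbb{R}^{n_u}$, equilibrium $x_{\mathrm{eq}} = 0$, and LQR gain $K_{\mathrm{lqr}}$ (optimal unconstrained feedback $u = -K_{\mathrm{lqr}} x$ for cost $\sum x^TQx + u^TRu$). A feed-forward ReLU network controller $\mathcal{N}(x;\theta)$ has $L$ hidden layers, with $n_L$ neurons in the last hidden layer, parameters $\theta_l = \{W_l, b_l\}$, layers $f_l(\xi) = W_l \xi + b_l$, ReLU activations $\max(0,\cdot)$, and a linear output layer $u = W_{L+1}\xi_L + b_{L+1}$. An activation pattern assigns to each hidden neuron a binary value (1 if its pre-activation is $\geq 0$, else 0); $\Gamma_{\mathrm{eq}}$ is the activation pattern at $x_{\mathrm{eq}}$, and $\mathcal{R}_{\mathrm{eq}}$ is the polytopic region of states sharing this activation pattern. On $\mathcal{R}_{\mathrm{eq}}$ the output of the last hidden layer is the affine function $W_{\Gamma_{\mathrm{eq}},L} x + b_{\Gamma_{\mathrm{eq}},L}$ (obtained by composing the hidden layers with the fixed activation pattern), so the network equals $W_{L+1}(W_{\Gamma_{\mathrm{eq}},L}x + b_{\Gamma_{\mathrm{eq}},L}) + b_{L+1}$ there. The regions depend only on the hidden layers, so changing the output layer does not change $\mathcal{R}_{\mathrm{eq}}$. Conditions (i)-(ii) are the solvability conditions of the linear system $A_{\mathrm{eq}} w = b_{\mathrm{eq}}$, with $w$ the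 stacked rows of $\hat{W}_{L+1}$, equivalent to $\hat{W}_{L+1} W_{\Gamma_{\mathrm{eq}},L} = -K_{\mathrm{lqr}}$. *)

From HB Require Import structures.
From mathcomp Require Import all_boot all_order all_algebra.
Set Implicit Arguments. Unset Strict Implicit. Unset Printing Implicit Defensive.
Import Order.TTheory GRing.Theory Num.Theory.
Local Open Scope ring_scope.

(* Layer widths are n 0
   (= n_x, the state dimension), n 1, ..., n L (= n_L).  Hidden layer k+1
   has weights W k : 'M_(n k.+1, n k) and biases b k : 'cV_(n k.+1). *)

Definition relu_mx (R : realFieldType) m p (A : 'M[R]_(m, p)) : 'M[R]_(m, p) :=
  map_mx (fun a => Num.max a 0) A.

Fixpoint hidden (R : realFieldType) (n : nat -> nat)
  (W : forall k, 'M[R]_(n k.+1, n k)) (b : forall k, 'cV[R]_(n k.+1))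
  (k : nat) (x : 'cV[R]_(n O)) : 'cV[R]_(n k) :=
  match k as k0 return 'cV[R]_(n k0) with
  | 0 => x
  | k'.+1 => relu_mx (W k' *m hidden W b k' x + b k')
  end.

Definition preact (R : realFieldType) (n : nat -> nat)
  (W : forall k, 'M[R]_(n k.+1, n k)) (b : forall k, 'cV[R]_(n k.+1))
  (k : nat) (x : 'cV[R]_(n O)) : 'cV[R]_(n k.+1) :=
  W k *m hidden W b k x + b k.

Definition act (R : realFieldType) (n : nat -> nat)
  (W : forall k, 'M[R]_(n k.+1, n k)) (b : forall k, 'cV[R]_(n k.+1))
  (k : nat) (x : 'cV[R]_(n O)) (i : 'I_(n k.+1)) : bool :=
  0 <= preact W b k x i ord0.
Arguments act [R n] W b k x i.

(* x belongs to R_eq: same activation pattern as x_eq = 0 on all L hidden layers *)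
Definition in_Req (R : realFieldType) (n : nat -> nat) (L : nat)
  (W : forall k, 'M[R]_(n k.+1, n k)) (b : forall k, 'cV[R]_(n k.+1))
  (x : 'cV[R]_(n O)) : Prop :=
  forall k, (k < L)%N -> forall i : 'I_(n k.+1), act W b k x i = act W b k 0 i.

Definition Dpat (R : realFieldType) (n : nat -> nat)
  (W : forall k, 'M[R]_(n k.+1, n k)) (b : forall k, 'cV[R]_(n k.+1))
  (k : nat) : 'M[R]_(n k.+1) :=
  diag_mx (\row_i (act W b k 0 i)%:R).
Arguments Dpat [R n] W b k.

(* W_{Gamma_eq,k}, b_{Gamma_eq,k}: composition of the first k hidden layers
   with the activation pattern fixed to Gamma_eq *)
Fixpoint WG (R : realFieldType) (n : nat -> nat)
  (W : forall k, 'M[R]_(n k.+1, n k)) (b : forall k, 'cV[R]_(n k.+1))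
  (k : nat) : 'M[R]_(n k, n O) :=
  match k as k0 return 'M[R]_(n k0, n O) with
  | 0 => 1%:M
  | k'.+1 => Dpat W b k' *m (W k' *m WG W b k')
  end.

Fixpoint bG (R : realFieldType) (n : nat -> nat)
  (W : forall k, 'M[R]_(n k.+1, n k)) (b : forall k, 'cV[R]_(n k.+1))
  (k : nat) : 'cV[R]_(n k) :=
  match k as k0 return 'cV[R]_(n k0) with
  | 0 => 0
  | k'.+1 => Dpat W b k' *m (W k' *m bG W b k' + b k')
  end.

Definition network (R : realFieldType) (n : nat -> nat) (L nu : nat)
  (W : forall k, 'M[R]_(n k.+1, n k)) (b : forall k, 'cV[R]_(n k.+1))
  (Wo : 'M[R]_(nu, n L)) (bo : 'cV[R]_nu) (x : 'cV[R]_(n O)) : 'cV[R]_nu :=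
  Wo *m hidden W b L x + bo.

Definition A_eq (R : realFieldType) (n : nat -> nat) (L nu : nat)
  (W : forall k, 'M[R]_(n k.+1, n k)) (b : forall k, 'cV[R]_(n k.+1))
  : 'M[R]_(\sum_(i < nu) n O, \sum_(j < nu) n L) :=
  \mxblock_(i < nu, j < nu)
    (if i == j then (WG W b L)^T else (0 : 'M[R]_(n O, n L))).

Definition b_eq (R : realFieldType) (n : nat -> nat) (nu : nat)
  (K : 'M[R]_(nu, n O)) : 'M[R]_(\sum_(i < nu) n O, 1) :=
  \mxcol_(i < nu) (- (row i K)^T).

Definition cost (R : realFieldType) (nu nL : nat)
  (Wo : 'M[R]_(nu, nL)) (bo : 'cV[R]_nu)
  (What : 'M[R]_(nu, nL)) (bhat : 'cV[R]_nu) : R :=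
  \sum_(i < nu) \sum_(j < nL) (What i j - Wo i j) ^+ 2
  + \sum_(i < nu) (bhat i ord0 - bo i ord0) ^+ 2.

Definition feasible (R : realFieldType) (n : nat -> nat) (L nu : nat)
  (W : forall k, 'M[R]_(n k.+1, n k)) (b : forall k, 'cV[R]_(n k.+1))
  (K : 'M[R]_(nu, n O)) (What : 'M[R]_(nu, n L)) (bhat : 'cV[R]_nu) : Prop :=
  What *m WG W b L = - K /\ What *m bG W b L + bhat = 0.

Definition is_solution (R : realFieldType) (n : nat -> nat) (L nu : nat)
  (W : forall k, 'M[R]_(n k.+1, n k)) (b : forall k, 'cV[R]_(n k.+1))
  (K : 'M[R]_(nu, n O)) (Wo : 'M[R]_(nu, n L)) (bo : 'cV[R]_nu)
  (What : 'M[R]_(nu, n L)) (bhat : 'cV[R]_nu) : Prop :=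
  feasible W b K What bhat /\
  forall W' b', feasible W b K W' b' -> cost Wo bo What bhat <= cost Wo bo W' b'.

From HB Require Import structures.
From mathcomp Require Import all_boot all_order all_algebra.
Import Order.TTheory GRing.Theory Num.Theory.
Set Implicit Arguments. Unset Strict Implicit. Unset Printing Implicit Defensive.
Local Open Scope ring_scope.

(* On R_eq the activation pattern is frozen, so the hidden layers compose to
   the affine map x |-> W_G x + b_G and the network is What (W_G x + b_G) + bhat,
   which the two constraints turn into -K x.  The constraints say that
   [What bhat] solves one linear matrix equation; by Rouche-Capelli the rank
   condition makes it solvable, and the least-squares program over this affine
   set is solved by the orthogonal projection of [W_{L+1} b_{L+1}], built from a
   basis of the direction space through its invertible Gram matrix. *)

Section FrobeniusNorm.
Variable R : realFieldType.

Definition mxnorm2 m p (Y : 'M[R]_(m, p)) : R := \tr (Y *m Y^T).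

Lemma mxnorm2E m p (Y : 'M[R]_(m, p)) : mxnorm2 Y = \sum_i \sum_j Y i j ^+ 2.
Proof.
apply: eq_bigr => i _; rewrite !mxE.
by apply: eq_bigr => j _; rewrite !mxE expr2.
Qed.

Lemma mxnorm2_ge0 m p (Y : 'M[R]_(m, p)) : 0 <= mxnorm2 Y.
Proof.
by rewrite mxnorm2E sumr_ge0 // => i _; rewrite sumr_ge0 // => j _; rewrite sqr_ge0.
Qed.

Lemma mxnorm2_eq0 m p (Y : 'M[R]_(m, p)) : (mxnorm2 Y == 0) = (Y == 0).
Proof.
apply/idP/eqP => [|->]; last first.
  by rewrite /mxnorm2 mul0mx /mxtrace big1 // => i _; rewrite mxE.
rewrite mxnorm2E psumr_eq0 => [/allP Y0|i _]; last first.
  by rewrite sumr_ge0 // => j _; rewrite sqr_ge0.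
apply/matrixP => i j; move/(_ i (mem_index_enum i)): Y0.
rewrite psumr_eq0 => [/allP/(_ j (mem_index_enum j))|k _]; last exact: sqr_ge0.
by rewrite sqrf_eq0 mxE => /eqP.
Qed.

Lemma mxnorm2_row_mx m p1 p2 (X : 'M[R]_(m, p1)) (Y : 'M[R]_(m, p2)) :
  mxnorm2 (row_mx X Y) = mxnorm2 X + mxnorm2 Y.
Proof. by rewrite /mxnorm2 tr_row_mx mul_row_col mxtraceD. Qed.

Lemma mxnorm2D_orth m p (X Y : 'M[R]_(m, p)) : X *m Y^T = 0 ->
  mxnorm2 (X + Y) = mxnorm2 X + mxnorm2 Y.
Proof.
move=> XY0; have YX0 : Y *m X^T = 0 by rewrite -[Y]trmxK -trmx_mul XY0 trmx0.
by rewrite /mxnorm2 linearD /= !mulmxDl !mulmxDr XY0 YX0 addr0 add0r mxtraceD.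
Qed.

Lemma gram_unitmx m p (B : 'M[R]_(m, p)) : row_free B -> B *m B^T \in unitmx.
Proof.
move=> freeB; rewrite -row_free_unit -kermx_eq0; apply/eqP.
apply: (row_free_inj freeB); rewrite mul0mx; apply/eqP.
rewrite -mxnorm2_eq0 /mxnorm2 trmx_mul !mulmxA -(mulmxA _ B) mulmx_ker mul0mx.
by rewrite /mxtrace big1 // => i _; rewrite mxE.
Qed.

End FrobeniusNorm.

Section AffineLeastSquares.
Variables (R : realFieldType) (m p q : nat).
Variables (M : 'M[R]_(p, q)) (D : 'M[R]_(m, q)) (C : 'M[R]_(m, p)).

Let B := row_base (kermx M).

Lemma mxnorm2_min_affine P : P *m M = D -> (P - C) *m B^T = 0 ->
  forall Z, Z *m M = D -> mxnorm2 (P - C) <= mxnorm2 (Z - C).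
Proof.
move=> PM PC_B Z ZM.
have /submxP[U ZP] : (Z - P <= B)%MS.
  by rewrite eq_row_base; apply/sub_kermxP; rewrite mulmxBl ZM PM subrr.
have orth : (Z - P) *m (P - C)^T = 0.
  by rewrite ZP -mulmxA -[B]trmxK -trmx_mul PC_B trmx0 mulmx0.
have -> : Z - C = (Z - P) + (P - C) by rewrite addrA subrK.
by rewrite (mxnorm2D_orth orth) lerDr mxnorm2_ge0.
Qed.

(* P = Z0 + (C - Z0) B^T (B B^T)^-1 B is the orthogonal projection of C
   onto the affine set Z0 + rowspace B = {Z | Z M = D}. *)
Lemma exists_orth_proj_affine Z0 : Z0 *m M = D ->
  exists P, P *m M = D /\ (P - C) *m B^T = 0.
Proof.
move=> Z0M; have BM : B *m M = 0 by apply/sub_kermxP; rewrite eq_row_base.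
have Gu := gram_unitmx (row_base_free (kermx M)).
exists (Z0 + (C - Z0) *m B^T *m invmx (B *m B^T) *m B); split.
  by rewrite mulmxDl -mulmxA BM mulmx0 addr0.
have GK : (C - Z0) *m B^T *m invmx (B *m B^T) *m B *m B^T = (C - Z0) *m B^T.
  by rewrite -(mulmxA _ B) mulmxKV.
by rewrite addrAC mulmxDl GK -mulmxDl -opprB addNr mul0mx.
Qed.

Lemma exists_mxnorm2_min_affine Z0 : Z0 *m M = D ->
  exists P, P *m M = D /\
    forall Z, Z *m M = D -> mxnorm2 (P - C) <= mxnorm2 (Z - C).
Proof.
move=> /exists_orth_proj_affine[P [PM PC_B]].
by exists P; split=> //; apply: mxnorm2_min_affine.
Qed.

End AffineLeastSquares.

Lemma rank_row_mx_solvable (F : fieldType) m n p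
    (A : 'M[F]_(m, n)) (B : 'M[F]_(m, p)) :
  \rank A = \rank (row_mx A B) -> exists X, A *m X = B.
Proof.
move=> rankAB; have /submxP[Y BY] : (B^T <= A^T)%MS.
  have /mxrank_leqif_sup : (A^T <= col_mx A^T B^T)%MS by rewrite -addsmxE addsmxSl.
  rewrite -tr_row_mx !mxrank_tr -rankAB => /leqif_refl.
  by rewrite tr_row_mx col_mx_sub => /andP[].
by exists Y^T; rewrite -[B]trmxK BY trmx_mul trmxK.
Qed.

Lemma costE (R : realFieldType) m p
    (Wo What : 'M[R]_(m, p)) (bo bhat : 'cV[R]_m) :
  cost Wo bo What bhat = mxnorm2 (row_mx What bhat - row_mx Wo bo).
Proof.
rewrite /cost opp_row_mx add_row_mx mxnorm2_row_mx !mxnorm2E.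
congr (_ + _); apply: eq_bigr => i _.
  by apply: eq_bigr => j _; rewrite !mxE.
by rewrite big_ord1 !mxE.
Qed.

Lemma relu_mx_diag (R : realFieldType) m (v : 'cV[R]_m) :
  relu_mx v = diag_mx (\row_i (0 <= v i ord0)%R%:R) *m v.
Proof.
apply/matrixP => i j; rewrite mul_diag_mx !mxE (ord1 j) /=.
by case: leP => _; rewrite ?mul1r ?mul0r.
Qed.

Section NetworkOnReq.
Variables (R : realFieldType) (n : nat -> nat) (L nu : nat).
Variables (W : forall k, 'M[R]_(n k.+1, n k)) (b : forall k, 'cV[R]_(n k.+1)).

Lemma hidden_in_Req x : in_Req L W b x ->
  forall k, (k <= L)%N -> hidden W b k x = WG W b k *m x + bG W b k.
Proof.
move=> Req; elim=> [|k IHk] k_lt_L /=; first by rewrite mul1mx addr0.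
have Dpat_x : diag_mx (\row_i (act W b k x i)%:R) = Dpat W b k.
  by rewrite /Dpat; congr diag_mx; apply/rowP => i; rewrite !mxE Req.
have -> : relu_mx (W k *m hidden W b k x + b k) = Dpat W b k *m preact W b k x.
  by rewrite -Dpat_x; apply: relu_mx_diag.
by rewrite /preact IHk 1?ltnW // !mulmxDr !mulmxA addrA.
Qed.

Lemma network_feasible_in_Req (K : 'M[R]_(nu, n O)) (What : 'M[R]_(nu, n L))
    (bhat : 'cV[R]_nu) x : feasible W b K What bhat ->
  in_Req L W b x -> network W b What bhat x = - K *m x.
Proof.
move=> [WGK bGK] Req; rewrite /network hidden_in_Req //.
by rewrite mulmxDr mulmxA WGK -addrA bGK addr0 mulNmx.
Qed.

(* The affine map x |-> W_G x + b_G in homogeneous coordinates. *)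
Definition WG_hom : 'M[R]_(n L + 1, n O + 1) :=
  block_mx (WG W b L) (bG W b L) 0 (1%:M : 'M_1).

Lemma feasibleE (K : 'M[R]_(nu, n O)) (What : 'M[R]_(nu, n L))
    (bhat : 'cV[R]_nu) :
  feasible W b K What bhat <-> row_mx What bhat *m WG_hom = row_mx (- K) 0.
Proof.
rewrite /WG_hom mul_row_block !mulmx0 mulmx1 addr0 /feasible.
by split=> [[-> ->] // | /eq_row_mx].
Qed.

Lemma A_eq_mul_mxcol (C_ : 'I_nu -> 'cV[R]_(n L)) :
  A_eq L nu W b *m \mxcol_i C_ i = \mxcol_i ((WG W b L)^T *m C_ i).
Proof.
rewrite /A_eq mxblockEv mxcol_mul; apply: eq_mxcol => i.
rewrite mul_mxrow_mxcol (bigD1 i) //= eqxx big1 ?addr0 // => j.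
by rewrite eq_sym => /negbTE ->; rewrite mul0mx.
Qed.

Lemma exists_feasible_weight K : (exists w, A_eq L nu W b *m w = b_eq K) ->
  exists What : 'M[R]_(nu, n L), What *m WG W b L = - K.
Proof.
move=> [w]; rewrite -(submxcolK w) A_eq_mul_mxcol /b_eq => /eq_mxcolP w_eq.
exists (\matrix_i (submxcol w i)^T); apply/row_matrixP => i.
by rewrite row_mul rowK -[LHS]trmxK trmx_mul trmxK w_eq !linearN /= trmxK.
Qed.

End NetworkOnReq.

Theorem theorem2 (R : realFieldType) (n : nat -> nat) (L nu : nat)
  (W : forall k, 'M[R]_(n k.+1, n k)) (b : forall k, 'cV[R]_(n k.+1))
  (Wo : 'M[R]_(nu, n L)) (bo : 'cV[R]_nu) (K : 'M[R]_(nu, n O)) :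
  \rank (A_eq L nu W b) = \rank (row_mx (A_eq L nu W b) (b_eq K)) ->
  (\rank (A_eq L nu W b) <= nu * n L)%N ->
  (exists (What : 'M[R]_(nu, n L)) (bhat : 'cV[R]_nu),
     is_solution W b K Wo bo What bhat) /\
  (forall (What : 'M[R]_(nu, n L)) (bhat : 'cV[R]_nu),
     is_solution W b K Wo bo What bhat ->
     forall x : 'cV[R]_(n O), in_Req L W b x ->
       network W b What bhat x = - K *m x).
Proof.
(* Condition (ii) always holds: A_eq has \sum_(j < nu) n L = nu * n L columns. *)
move=> rank_eq _.
have [W0 W0K] := exists_feasible_weight (rank_row_mx_solvable rank_eq).
have feas0 : feasible W b K W0 (- (W0 *m bG W b L)) by split; rewrite ?subrr.
have [P [PM P_min]] :=
  exists_mxnorm2_min_affine (row_mx Wo bo) ((feasibleE _ _ _ _ _).1 feas0).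
split.
  exists (lsubmx P), (rsubmx P); split; first by apply/feasibleE; rewrite hsubmxK.
  by move=> W' b' /feasibleE feas'; rewrite !costE hsubmxK; apply: P_min.
by move=> What bhat [feas _] x; apply: network_feasible_in_Req.
Qed.
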